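(* Let $(E,\tau)$ be a locally solid vector lattice, where $\tau$ is a Fatou topology. Suppose that the carrier $C_\tau$ has a countable order basis. Then $C_\tau=E$.
   Context: All vector lattices are real and Archimedean; linear topologies are Hausdorff. A locally solid topology on a vector lattice is a linear topology such that zero has a neighbourhood basis of solid sets. A subset is order closed if it contains the order limits of nets in it (a net $x_\alpha$ order converges to $x$ if there is a net $y_\beta\downarrow0$ such that for each $\beta_0$ eventually $|x_\alpha-x|\leq y_{\beta_0}$). A Fatou topology is a locally solid topology in which zero has a neighbourhood basis of order closed solid sets. A sequence $(V_n)$ of neighbourhoods of zero is normal if $V_{n+1}+V_{n+1}\subseteq V_n$; the carrier $C_\tau$ is the union of the disjoint complements $N^{\mathrm d}$ (in $E$) where $N=\bigcap_n V_n$ ranges over intersections of normal sequences of solid $\tau$-neighbourhoods of zero. A non-empty subset $A$ of a vector lattice $G$ is an order basis of $G$ if $A^{\mathrm d}=\{0\}$ in $G$. *)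

From HB Require Import structures.
From mathcomp Require Import all_boot all_order all_algebra.
From mathcomp Require Import all_classical all_reals all_analysis.
Set Implicit Arguments.
Unset Strict Implicit.
Unset Printing Implicit Defensive.
Import Order.TTheory GRing.Theory Num.Theory.
Local Open Scope classical_set_scope.
Local Open Scope ring_scope.

Section VectorLattice.
Variables (R : realType) (E : lmodType R) (le : E -> E -> Prop).

Definition is_sup2 (x y z : E) : Prop :=
  le x z /\ le y z /\ forall w, le x w -> le y w -> le z w.

Definition is_inf_set (A : set E) (z : E) : Prop :=
  (forall a, A a -> le z a) /\ forall w, (forall a, A a -> le w a) -> le w z.

Record vector_lattice : Prop := VectorLattice {
  vl_refl : forall x, le x x;
  vl_trans : forall x y z, le x y -> le y z -> le x z;
  vl_antisym : forall x y, le x y -> le y x -> x = y;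
  vl_add : forall x y z, le x y -> le (x + z) (y + z);
  vl_scale : forall (a : R) x y, 0 <= a -> le x y -> le (a *: x) (a *: y);
  vl_sup : forall x y, exists z, is_sup2 x y z;
  vl_archimedean : forall x y : E,
      (forall n : nat, le 0 (x *+ n) /\ le (x *+ n) y) -> x = 0 }.

Definition sup2 (x y : E) : E := xget 0 [set z | is_sup2 x y z].
Definition absv (x : E) : E := sup2 x (- x).
Definition inf2 (x y : E) : E := - sup2 (- x) (- y).

Definition disj (x y : E) : Prop := inf2 (absv x) (absv y) = 0.

Definition dcompl (A : set E) : set E := [set x | forall y, A y -> disj x y].

Definition solid (A : set E) : Prop :=
  forall x y, A x -> le (absv y) (absv x) -> A y.

Definition directed (I : Type) (r : I -> I -> Prop) : Prop :=
  inhabited I /\ (forall i, r i i) /\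
  (forall i j k, r i j -> r j k -> r i k) /\
  (forall i j, exists k, r i k /\ r j k).

Definition decr_to_zero (J : Type) (rJ : J -> J -> Prop) (y : J -> E) : Prop :=
  directed rJ /\ (forall b1 b2, rJ b1 b2 -> le (y b2) (y b1)) /\
  is_inf_set (range y) 0.

Definition order_conv (I : Type) (rI : I -> I -> Prop) (x : I -> E) (l : E)
  : Prop :=
  exists (J : Type) (rJ : J -> J -> Prop) (y : J -> E),
    decr_to_zero rJ y /\
    forall b0, exists a0, forall a, rI a0 a -> le (absv (x a - l)) (y b0).

Definition order_closed (A : set E) : Prop :=
  forall (I : Type) (rI : I -> I -> Prop) (x : I -> E) (l : E),
    directed rI -> (forall i, A (x i)) -> order_conv rI x l -> A l.

(** order basis of a subset G (G will be an ideal, so disjointness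
    in G coincides with disjointness in E) *)
Definition order_basis (G A : set E) : Prop :=
  A !=set0 /\ A `<=` G /\ forall x, G x -> (forall a, A a -> disj x a) -> x = 0.

End VectorLattice.

Section Topology.
Variables (R : realType) (E : topologicalLmodType R) (le : E -> E -> Prop).

Definition locally_solid : Prop :=
  forall U : set E, nbhs 0 U ->
    exists V : set E, nbhs 0 V /\ solid le V /\ V `<=` U.

Definition fatou_topology : Prop :=
  locally_solid /\
  forall U : set E, nbhs 0 U ->
    exists V : set E, nbhs 0 V /\ solid le V /\ order_closed le V /\ V `<=` U.

Definition normal_solid_seq (V : nat -> set E) : Prop :=
  (forall n, nbhs 0 (V n)) /\ (forall n, solid le (V n)) /\
  (forall n x y, V n.+1 x -> V n.+1 y -> V n (x + y)).

Definition carrier : set E :=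
  [set x | exists V : nat -> set E, normal_solid_seq V /\
                                   dcompl le (\bigcap_n V n) x].

End Topology.

From HB Require Import structures.
From mathcomp Require Import all_boot all_order all_algebra.
From mathcomp Require Import all_classical all_reals all_analysis.
Set Implicit Arguments.
Unset Strict Implicit.
Unset Printing Implicit Defensive.
Import Order.TTheory GRing.Theory Num.Theory.
Local Open Scope classical_set_scope.
Local Open Scope ring_scope.

(* Merging diagonally the normal sequences that witness membership of the
   countably many basis vectors in the carrier yields one normal sequence
   (W_k) with A ⊆ N^d for N = ∩ W_k, so it suffices to show N = {0}.  For
   0 ≠ y ∈ N choose, by the Hausdorff and Fatou properties, an order closed
   solid neighbourhood U_0 of 0 missing y and continue it to a normal sequence
   (U_k) with intersection M.  The elements of M in [0, |y|] form an upward
   directed net, and by the Archimedean property its supremum is |y| unless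
   some nonzero z in [0, |y|] lies in M^d.  Such a z would lie in the carrier
   (M^d ⊆ C_τ) and in N, hence be disjoint from A, so z = 0.  Thus |y| is an
   order limit of elements of M ⊆ U_0, so |y| ∈ U_0 and y ∈ U_0, a
   contradiction. *)

Section VectorLatticeTheory.
Variables (R : realType) (E : lmodType R) (le : E -> E -> Prop).
Hypothesis vl : vector_lattice le.

Lemma vle_refl x : le x x. Proof. exact: vl_refl vl x. Qed.

Lemma vle_trans y x z : le x y -> le y z -> le x z.
Proof. exact: (vl_trans vl). Qed.

Lemma vle_anti x y : le x y -> le y x -> x = y.
Proof. exact: (vl_antisym vl). Qed.

Lemma vle_add2r z x y : le x y -> le (x + z) (y + z).
Proof. exact: (vl_add vl). Qed.

Lemma vle_add2l z x y : le x y -> le (z + x) (z + y).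
Proof. by rewrite ![z + _]addrC; apply: vle_add2r. Qed.

Lemma vle_add x y u v : le x y -> le u v -> le (x + u) (y + v).
Proof. by move=> xy uv; apply: vle_trans (vle_add2r u xy) (vle_add2l y uv). Qed.

Lemma vaddr_ge0 x y : le 0 x -> le 0 y -> le 0 (x + y).
Proof. by move=> x0 y0; rewrite -(addr0 0); apply: vle_add. Qed.

Lemma vle_opp x y : le x y -> le (- y) (- x).
Proof.
move=> /(vle_add2r (- x - y)).
by rewrite addrA subrr add0r addrCA subrr addr0.
Qed.

Lemma vsubr_ge0 x y : le 0 (y - x) <-> le x y.
Proof.
split=> [/(vle_add2r x)|/(vle_add2r (- x))]; last by rewrite subrr.
by rewrite add0r subrK.
Qed.

Lemma vle_subl x y : le 0 y -> le (x - y) x.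
Proof. by move=> y0; apply/vsubr_ge0; rewrite opprB addrC subrK. Qed.

Lemma sup2P x y : is_sup2 le x y (sup2 le x y).
Proof. by apply: xgetPex; exact: (vl_sup vl x y). Qed.

Lemma sup2_uniq x y z : is_sup2 le x y z -> sup2 le x y = z.
Proof.
move=> [xz [yz zmin]]; have [xs [ys smin]] := sup2P x y.
by apply: vle_anti; [apply: smin | apply: zmin].
Qed.

Lemma inf2_lel x y : le (inf2 le x y) x.
Proof. by have [/vle_opp + _] := sup2P (- x) (- y); rewrite opprK. Qed.

Lemma inf2_ler x y : le (inf2 le x y) y.
Proof. by have [_ [/vle_opp + _]] := sup2P (- x) (- y); rewrite opprK. Qed.

Lemma inf2_glb x y w : le w x -> le w y -> le w (inf2 le x y).
Proof.
move=> wx wy; have [_ [_ smin]] := sup2P (- x) (- y).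
by rewrite -[w]opprK; apply/vle_opp/smin; apply: vle_opp.
Qed.

(* [x \/ -x] is above [x] and [-x], hence twice it is above [x - x = 0]. *)
Lemma absv_ge0 x : le 0 (absv le x).
Proof.
have [xa [xNa _]] := sup2P x (- x).
have /(vl_scale vl) : 0 <= (2 : R)^-1 by rewrite invr_ge0 ler0n.
move=> /(_ _ _ (vle_add xa xNa)); rewrite subrr scaler0 scalerDr -scalerDl.
have -> : (2 : R)^-1 + 2^-1 = 1 by rewrite [RHS](splitr 1) mul1r.
by rewrite scale1r.
Qed.

Lemma absv_id x : le 0 x -> absv le x = x.
Proof.
move=> x0; apply: sup2_uniq; split; first exact: vle_refl.
split=> [|w //]; apply: (vle_trans _ x0); rewrite -[X in le _ X]oppr0.
exact: vle_opp.
Qed.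

Lemma absv_neg x : le x 0 -> absv le x = - x.
Proof.
move=> x0; apply: sup2_uniq; split; last by split=> [|w _ //]; exact: vle_refl.
apply: (vle_trans x0); rewrite -[X in le X _]oppr0; exact: vle_opp.
Qed.

Lemma absvK x : absv le (absv le x) = absv le x.
Proof. exact/absv_id/absv_ge0. Qed.

Lemma inf2C x y : inf2 le x y = inf2 le y x.
Proof.
by apply: vle_anti; apply: inf2_glb; first [apply: inf2_ler | apply: inf2_lel].
Qed.

Lemma disjC x y : disj le x y -> disj le y x.
Proof. by rewrite /disj inf2C. Qed.

Lemma disjx0 x : disj le x 0.
Proof.
have absv0 : absv le 0 = 0 by apply/absv_id/vle_refl.
rewrite /disj absv0; apply: vle_anti; first exact: inf2_ler.
by apply: inf2_glb; [apply: absv_ge0 | apply: vle_refl].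
Qed.

Lemma dcomplS (A B : set E) : A `<=` B -> dcompl le B `<=` dcompl le A.
Proof. by move=> AB x xB y /AB; apply: xB. Qed.

Lemma decr_to_zero_order_conv (I : Type) (rI : I -> I -> Prop) (x : I -> E) l :
  decr_to_zero le rI (fun i => l - x i) -> order_conv le rI x l.
Proof.
move=> dz; exists I, rI, (fun i => l - x i); split=> // i0.
have [_ [decr [lb _]]] := dz.
exists i0 => i /decr; rewrite absv_neg ?opprB //.
have /vsubr_ge0/(vle_add2r (- l)) := lb _ (imageT _ i).
by rewrite subrr.
Qed.

Definition segment (M : set E) (x : E) : set E :=
  [set d | le 0 d /\ le d x /\ M d].

Section Band.
Variables (M : set E) (x : E).
Hypotheses (solidM : solid le M) (M0 : M 0).
Hypothesis addM : forall a b, M a -> M b -> M (a + b).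
Hypothesis x_ge0 : le 0 x.

Lemma segment0 : segment M x 0.
Proof. by split; [exact: vle_refl | split]. Qed.

Lemma segment_sup2 d1 d2 :
  segment M x d1 -> segment M x d2 -> segment M x (sup2 le d1 d2).
Proof.
move=> [d1_ge0 [d1x d1M]] [d2_ge0 [d2x d2M]].
have [d1s [d2s smin]] := sup2P d1 d2.
have s_ge0 := vle_trans d1_ge0 d1s.
split=> //; split; first exact: smin.
apply: (solidM (addM d1M d2M)).
rewrite absv_id // absv_id; last exact: vaddr_ge0.
apply: smin; first by rewrite -[X in le X _]addr0; apply: vle_add2l.
by rewrite -[X in le X _]add0r; apply: vle_add2r.
Qed.

(* The Archimedean property: if [v] is in [M] and below [x - u], then
   induction shows [v *+ n <= x] for all [n], so [v = 0]. *)
Lemma segment_ub_dcompl u :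
  (forall d, segment M x d -> le d u) -> le u x -> dcompl le M (x - u).
Proof.
move=> ub ux m Mm; have xu_ge0 : le 0 (x - u) by apply/vsubr_ge0.
rewrite /disj (absv_id xu_ge0); set v := inf2 le _ _.
have v_ge0 : le 0 v by apply: inf2_glb => //; apply: absv_ge0.
have vxu : le v (x - u) := inf2_lel _ _.
have vM : M v by apply: (solidM Mm); rewrite absv_id //; apply: inf2_ler.
have seg_v n : segment M x (v *+ n).
  elim: n => [|n [nv_ge0 [nvx nvM]]]; first by rewrite mulr0n; apply: segment0.
  rewrite mulrSr; split; first exact: vaddr_ge0.
  split; last exact: addM.
  have := vle_add (ub _ (conj nv_ge0 (conj nvx nvM))) vxu.
  by rewrite [u + _]addrC subrK.
by apply: (vl_archimedean vl (y := x)) => n; have [? [? _]] := seg_v n.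
Qed.

Hypothesis M_dcompl_trivial :
  forall z, le 0 z -> le z x -> dcompl le M z -> z = 0.

Lemma segment_sup u : (forall d, segment M x d -> le d u) -> le x u.
Proof.
move=> ub; set w := inf2 le x u.
have ubw d : segment M x d -> le d w.
  by move=> sd; apply: inf2_glb; [case: sd => _ [] | apply: ub].
have wx : le w x := inf2_lel x u.
have : x - w = 0.
  apply: M_dcompl_trivial; first exact/vsubr_ge0.
    exact/vle_subl/ubw/segment0.
  exact: segment_ub_dcompl.
by move/eqP; rewrite subr_eq0 => /eqP ->; apply: inf2_ler.
Qed.

(* [x] is the supremum of the upward directed net [segment M x]. *)
Lemma order_closed_band (S : set E) :
  order_closed le S -> M `<=` S -> S x.
Proof.
move=> oS MS; pose I := {d | segment M x d}.
pose rI (i j : I) := le (sval i) (sval j).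
have dirI : directed rI.
  split; first exact: inhabits (exist _ 0 segment0).
  split; first by move=> ?; apply: vle_refl.
  split; first by move=> i j k; apply: vle_trans.
  move=> [d1 s1] [d2 s2]; exists (exist _ _ (segment_sup2 s1 s2)).
  by have [? [? _]] := sup2P d1 d2.
apply: (oS I rI sval x dirI); first by move=> [d [_ [_ dM]]] /=; apply: MS.
apply: decr_to_zero_order_conv; split=> //; split.
  by move=> i j ij; apply/vle_add2l/vle_opp.
split; first by move=> _ [[d [_ [dx _]]] _ <-] /=; apply/vsubr_ge0.
move=> w lbw; have : le x (x - w).
  apply: segment_sup => d sd.
  have /vsubr_ge0 := lbw _ (imageT _ (exist _ d sd)).
  by rewrite addrAC => /vsubr_ge0.
move=> /vsubr_ge0; rewrite addrAC subrr add0r => /vle_opp.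
by rewrite opprK oppr0.
Qed.

End Band.
End VectorLatticeTheory.

Section SolidTopology.
Variables (R : realType) (E : topologicalLmodType R) (le : E -> E -> Prop).

Lemma nbhs0_split (W : set E) : nbhs 0 W ->
  exists2 V : set E, nbhs 0 V & forall a b, V a -> V b -> W (a + b).
Proof.
move=> W0; have := @add_continuous _ (0, 0) W; rewrite /= addr0 => /(_ W0).
move=> [[A B] /= [A0 B0] AB]; exists (A `&` B); first exact: filterI.
by move=> a b [Aa _] [_ Bb]; apply: (AB (a, b)).
Qed.

Section LocallySolid.
Hypothesis ls : locally_solid le.

Lemma locally_solid_split (W : set E) : nbhs 0 W ->
  exists V : set E,
    [/\ nbhs 0 V, solid le V & forall a b, V a -> V b -> W (a + b)].
Proof.
move=> /nbhs0_split [V0 V00 V0W]; have [V [V0' [sV VV0]]] := ls V00.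
by exists V; split=> // a b /VV0 Va /VV0; apply: V0W.
Qed.

Lemma normal_solid_seq_from (W : set E) : nbhs 0 W -> solid le W ->
  exists2 V : nat -> set E, normal_solid_seq le V & V 0%N = W.
Proof.
move=> W0 sW.
have /choice [half halfP] : forall U : set E, exists V : set E, nbhs 0 U ->
    [/\ nbhs 0 V, solid le V & forall a b, V a -> V b -> U (a + b)].
  move=> U; have [/locally_solid_split [V VP]|nU] := pselect (nbhs 0 U).
    by exists V.
  by exists U => /nU.
pose V n := iter n half W.
have V_nbhs_solid n : nbhs 0 (V n) /\ solid le (V n).
  by elim: n => [|n [Vn0 _]] //=; have [] := halfP _ Vn0.
exists V => //; split; first by move=> n; case: (V_nbhs_solid n).
split; first by move=> n; case: (V_nbhs_solid n).
by move=> n; have [_ _] := halfP _ (proj1 (V_nbhs_solid n)).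
Qed.

End LocallySolid.

Lemma normal_solid_seqT : normal_solid_seq le (fun _ => setT).
Proof. by split=> [_|]; [exact: filterT | split]. Qed.

Section NormalSeq.
Variable V : nat -> set E.
Hypothesis nV : normal_solid_seq le V.

Lemma normal_seq0 n : V n 0.
Proof. by case: nV => V0 _; apply: nbhs_singleton (V0 n). Qed.

Lemma normal_seq_decr k n : (k <= n)%N -> V n `<=` V k.
Proof.
elim: n => [|n IH]; first by rewrite leqn0 => /eqP ->.
rewrite leq_eqVlt ltnS => /orP[/eqP -> // | /IH VnVk] x VSnx; apply: VnVk.
by case: nV => _ [_ VD]; have := VD n x 0 VSnx (normal_seq0 _); rewrite addr0.
Qed.

Lemma normal_seq_meet0 : (\bigcap_n V n) 0.
Proof. by move=> n _; apply: normal_seq0. Qed.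

Lemma normal_seq_meet_solid : solid le (\bigcap_n V n).
Proof.
by case: nV => _ [sV _] x y Vx yx n _; apply: (sV n x) => //; apply: Vx.
Qed.

Lemma normal_seq_meetD a b :
  (\bigcap_n V n) a -> (\bigcap_n V n) b -> (\bigcap_n V n) (a + b).
Proof.
by case: nV => _ [_ VD] Va Vb n _; apply: VD; [apply: Va | apply: Vb].
Qed.

End NormalSeq.

Lemma normal_seq_diag (Vs : nat -> nat -> set E) :
  (forall n, normal_solid_seq le (Vs n)) ->
  exists2 W : nat -> set E, normal_solid_seq le W &
    forall n, \bigcap_k W k `<=` \bigcap_k Vs n k.
Proof.
move=> nVs; exists (fun k => [set x | forall n, (n <= k)%N -> Vs n k x]).
  split; [|split].
  - move=> k; apply: filterS (@filter_forall _ 'I_k.+1 (fun n => Vs n k) _ _ _).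
      by move=> x Vx n nk; apply: (Vx (Ordinal (nk : (n < k.+1)%N))).
    by move=> n; case: (nVs n) => + _; apply.
  - move=> k x y Wx yx n nk; case: (nVs n) => _ [sV _].
    by apply: (sV k x) => //; apply: Wx.
  - move=> k x y Wx Wy n nk; case: (nVs n) => _ [_]; apply.
      by apply: Wx; rewrite ltnW.
    by apply: Wy; rewrite ltnW.
move=> n x Wx k _; apply: (normal_seq_decr (nVs n) (leq_maxr n k)).
exact: (Wx _ Logic.I n (leq_maxl n k)).
Qed.

Lemma countable_sub_carrier (A : set E) : countable A -> A `<=` carrier le ->
  exists2 W : nat -> set E, normal_solid_seq le W &
    A `<=` dcompl le (\bigcap_k W k).
Proof.
move=> /countable_injP [f finj] Acar.
have /choice [Vs VsP] : forall n, exists V, normal_solid_seq le V /\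
    forall a, A a -> f a = n -> dcompl le (\bigcap_k V k) a.
  move=> n; have [[a [Aa fa]]|noa] := pselect (exists a, A a /\ f a = n).
    have [V [nV aV]] := Acar a Aa; exists V; split=> // b Ab fb.
    by rewrite (finj b a) ?inE //; congruence.
  exists (fun _ => setT); split=> [|a Aa fa]; first exact: normal_solid_seqT.
  by case: noa; exists a.
have [W nW WVs] := normal_seq_diag (fun n => (VsP n).1).
by exists W => // a Aa; apply: dcomplS (WVs (f a)) _ ((VsP (f a)).2 a Aa erefl).
Qed.

Lemma carrier_eqT (vl : vector_lattice le) (W : nat -> set E) :
  normal_solid_seq le W -> \bigcap_k W k `<=` [set 0] -> carrier le = setT.
Proof.
move=> nW W0; apply/seteqP; split=> // x _; exists W; split=> // y /W0 ->.
exact: disjx0.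
Qed.

End SolidTopology.

Lemma order_basis_meet0 (R : realType) (E : topologicalLmodType R)
    (le : E -> E -> Prop) (A : set E) (W : nat -> set E) :
  vector_lattice le -> hausdorff_space E -> fatou_topology le ->
  normal_solid_seq le W -> order_basis le (carrier le) A ->
  A `<=` dcompl le (\bigcap_k W k) -> \bigcap_k W k `<=` [set 0].
Proof.
move=> vl hE [ls fatou] nW [_ [_ Abasis]] AW y Wy; apply: contrapT => y_neq0.
have /(hausdorff_accessible hE) [U [oU /set_mem U0 /set_mem Uy]] : (0 : E) != y.
  by apply/eqP => /esym.
have [U' [U'0 [sU' [oU' U'U]]]] := fatou U (open_nbhs_nbhs (conj oU U0)).
have [Us nUs Us0] := normal_solid_seq_from ls U'0 sU'.
have M_dcompl_trivial z : le 0 z -> le z (absv le y) ->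
    dcompl le (\bigcap_k Us k) z -> z = 0.
  move=> z_ge0 zy zM; apply: Abasis; first by exists Us.
  move=> a /AW aW; apply/disjC/aW => //.
  by apply: (normal_seq_meet_solid nW Wy); rewrite (absv_id vl z_ge0).
have : U' (absv le y).
  apply: (order_closed_band vl (normal_seq_meet_solid nUs)
    (normal_seq_meet0 nUs) (normal_seq_meetD nUs) (absv_ge0 vl y)
    M_dcompl_trivial oU').
  by rewrite -Us0 => x /(_ 0%N Logic.I).
move=> /sU' U'y; apply/Uy/U'U/U'y.
by rewrite (absvK vl); apply: vle_refl.
Qed.

Theorem proposition3p15 (R : realType) (E : topologicalLmodType R)
    (le : E -> E -> Prop) :
  vector_lattice le -> hausdorff_space E ->
  locally_solid le -> fatou_topology le ->
  (exists A : set E, countable A /\ order_basis le (carrier le) A) ->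
  carrier le = setT.
Proof.
(* local solidity is already part of [fatou_topology] *)
move=> vl hE _ fatou [A [Acount Abasis]].
have [_ [Acar _]] := Abasis.
have [W nW AW] := countable_sub_carrier Acount Acar.
exact: (carrier_eqT vl nW (order_basis_meet0 vl hE fatou nW Abasis AW)).
Qed.
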